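(* For $n\ge 6$, let $W_n$ be the wheel graph on $n$ vertices, i.e. the join of a cycle $C_{n-1}$ with a single vertex $c$ adjacent to all vertices of the cycle. Then $\mathcal{R}(W_n)=\frac{(n-3)(n^2+8)}{2(n-2)(4n-13)}$.
   Context: All graphs are finite, simple and connected, with at least two vertices; $d(u,v)$ denotes the shortest-path distance. $V_p$ denotes the set of all unordered pairs $(u,v)$ of distinct vertices. A vertex $x$ resolves the pair $(u,v)$ if $d(x,u)\neq d(x,v)$. For $(u,v)\in V_p$, $R(u,v)$ is the set of all vertices resolving $(u,v)$ (it always contains $u$ and $v$). The resolving share of a vertex $w$ for $(u,v)$ is $r_w(u,v)=\frac{1}{|R(u,v)|}$ if $w$ resolves $u$ and $v$, and $r_w(u,v)=0$ otherwise. For a vertex $w$, $R(w)$ is the set of pairs in $V_p$ resolved by $w$. The average resolving share of $w$ is $ar_w(G)=\frac{1}{|R(w)|}\sum_{(u,v)\in R(w)} r_w(u,v)$, and the resolving topological index of $G$ is $\mathcal{R}(G)=\sum_{w\in V(G)} ar_w(G)$. *)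

From mathcomp Require Import all_boot all_order all_algebra.
Set Implicit Arguments. Unset Strict Implicit. Unset Printing Implicit Defensive.
Import Order.TTheory GRing.Theory Num.Theory.

Section Graph.
Variables (T : finType) (e : rel T).

Fixpoint walk (k : nat) (x y : T) : bool :=
  if k is k'.+1 then [exists z, e x z && walk k' z y] else x == y.

(* shortest-path distance: least k with a walk of length k from x to y
   (a shortest walk is a path; in a connected graph k < #|T| always exists) *)
Definition dist (x y : T) : nat := find (fun k => walk k x y) (iota 0 #|T|).

Definition Vp : {set {set T}} := [set P : {set T} | #|P| == 2].

Definition resolves (x : T) (P : {set T}) : bool :=
  [exists u in P, exists v in P, dist x u != dist x v].

Definition Rpair (P : {set T}) : {set T} := [set x | resolves x P].

Local Open Scope ring_scope.
Definition rshare (w : T) (P : {set T}) : rat :=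
  if resolves w P then (#|Rpair P|%:R)^-1 else 0.

Definition Rvert (w : T) : {set {set T}} := [set P in Vp | resolves w P].

Definition ar (w : T) : rat :=
  (#|Rvert w|%:R)^-1 * \sum_(P in Rvert w) rshare w P.

Definition RTI : rat := \sum_(w : T) ar w.
Local Close Scope ring_scope.
End Graph.

(* Wheel graph W_n on vertex set 'I_n: vertex 0 is the hub c, and
   vertices 1..n-1 form the cycle C_{n-1} (i ~ i+1, and n-1 ~ 1). *)
Definition cyc_adj (m a b : nat) : bool :=
  (a.+1 %% m == b) || (b.+1 %% m == a).

Definition wheel (n : nat) : rel 'I_n :=
  fun i j => (i != j) &&
    [|| val i == 0, val j == 0 | cyc_adj n.-1 (val i).-1 (val j).-1].
Arguments wheel n : clear implicits.

From mathcomp Require Import all_boot all_order all_algebra.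
From mathcomp Require Import zify ring lra.
Import GRing.Theory Num.Theory.
Set Implicit Arguments. Unset Strict Implicit. Unset Printing Implicit Defensive.

(* The hub c of W_n is adjacent to every vertex, so all distances are 0, 1 or 2
   and a vertex w resolves {u, v} unless u and v are both neighbours of w or
   both non-neighbours of w.  Hence c resolves exactly the n - 1 pairs {c, r},
   each of which is resolved by all vertices but the two rim neighbours of r,
   so ar(c) = 1/(n-2).  A rim vertex has degree 3 and resolves
   C(n,2) - C(3,2) - C(n-4,2) = 4n - 13 pairs.  As the shares of every pair
   sum to 1, the rim vertices carry a total share of C(n,2) - (n-1)/(n-2),
   which, their |R(w)| being equal, is 4n - 13 times the sum of their average
   shares.  The argument works for any graph with a universal vertex whose
   other vertices all have the same degree. *)

Section Resolving.
Variables (T : finType) (e : rel T).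

Definition nbhd (x : T) : {set T} := [set y | e x y].

Definition pairs_in (A : {set T}) : {set {set T}} :=
  [set P : {set T} | P \subset A & #|P| == 2].

Lemma walk1 x y : walk e 1 x y = e x y.
Proof.
by apply/existsP/idP => [[z /andP[exz /eqP <-]] // | exy]; exists y; rewrite exy eqxx.
Qed.

Lemma dist_eq0 x y : (dist e x y == 0) = (x == y).
Proof.
rewrite /dist; have : 0 < #|T| by apply/card_gt0P; exists x.
by case: #|T| => // m _ /=; case: (x == y).
Qed.

Lemma resolves_pair x u v : u != v ->
  resolves e x [set u; v] = (dist e x u != dist e x v).
Proof.
move=> uv; apply/exists_inP/idP => [[u' /set2P u'E /exists_inP [v' /set2P v'E]] | duv].
  by case: u'E v'E => -> [] ->; rewrite ?eqxx // eq_sym.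
by exists u; rewrite ?set21 //; apply/exists_inP; exists v; rewrite ?set22.
Qed.

Lemma mem_Rpair_pair u v : u != v -> u \in Rpair e [set u; v].
Proof.
move=> uv; rewrite inE resolves_pair //.
by rewrite (eqP (_ : dist e u u == 0)) ?dist_eq0 // eq_sym dist_eq0.
Qed.

Local Open Scope ring_scope.

Lemma sum_rshare_Rvert w :
  \sum_(P in Rvert e w) rshare e w P = \sum_(P in Vp T) rshare e w P.
Proof.
rewrite big_mkcond [RHS]big_mkcond; apply: eq_bigr => P _.
by rewrite inE /rshare; case: (P \in Vp T); case: (resolves e w P).
Qed.

(* Every pair is resolved by its own members, so its shares sum to 1. *)
Lemma sum_rshare_pair P : P \in Vp T -> \sum_w rshare e w P = 1.
Proof.
rewrite inE => /cards2P [u [v [uv ->]]].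
rewrite /rshare -big_mkcond (eq_bigl (fun w => w \in Rpair e [set u; v])); last first.
  by move=> w; rewrite inE.
rewrite sumr_const -[_ *+ _]mulr_natr mulVf // pnatr_eq0 -lt0n.
by apply/card_gt0P; exists u; apply: mem_Rpair_pair.
Qed.

End Resolving.

Section UniversalVertex.
Variables (T : finType) (e : rel T) (h : T).
Hypothesis e_sym : symmetric e.
Hypothesis e_irr : irreflexive e.
Hypothesis h_adj : forall x, x != h -> e h x.
Hypothesis card_T : 2 < #|T|.

Lemma dist_universal x y :
  dist e x y = if x == y then 0 else if e x y then 1 else 2.
Proof.
have walk2 : x != y -> ~~ e x y -> walk e 2 x y.
  move=> xy nexy.
  have xh : x != h by apply: contraNneq nexy => xh; rewrite xh h_adj // -xh eq_sym.
  have yh : y != h by apply: contraNneq nexy => ->; rewrite e_sym h_adj.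
  apply/existsP; exists h; rewrite e_sym h_adj //=.
  by apply/existsP; exists y; rewrite h_adj // eqxx.
rewrite /dist; move: card_T; case: #|T| => [|[|[|m]]] // _.
rewrite /= -/(walk e 1 x y) walk1.
case: eqP => [// | /eqP xy]; case: ifP => // /negbT nexy.
by have := walk2 xy nexy => /= ->.
Qed.

Lemma dist_hub x : dist e h x = if x == h then 0 else 1.
Proof. by rewrite dist_universal eq_sym; case: eqP => // /eqP/h_adj ->. Qed.

Lemma Rvert_hub : Rvert e h = [set [set h; r] | r in [set~ h]].
Proof.
apply/setP => P; rewrite inE; apply/andP/imsetP => [[] | [r]].
  rewrite inE => /cards2P [u [v [uv ->]]]; rewrite resolves_pair // !dist_hub.
  case: (eqVneq u h) => [-> | uh]; case: (eqVneq v h) => [-> | vh] // _.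
    by exists v; rewrite ?inE.
  by exists u; rewrite ?inE // setUC.
rewrite !inE => rh ->; rewrite cards2 (eq_sym h r) rh; split=> //.
by rewrite resolves_pair 1?eq_sym // !dist_hub eqxx (negbTE rh).
Qed.

Lemma pair_hub_inj : {in [set~ h] &, injective (fun r => [set h; r])}.
Proof.
move=> r s; rewrite !inE => rh _ Ers.
by have := set22 h r; rewrite Ers !inE (negbTE rh) => /eqP.
Qed.

Lemma Rpair_hubC r : r != h -> ~: Rpair e [set h; r] = nbhd e r :\ h.
Proof.
move=> rh; apply/setP => x; rewrite !inE resolves_pair 1?eq_sym // negbK.
rewrite !dist_universal; case: (eqVneq x h) => [-> | xh].
  by rewrite (eq_sym h r) (negbTE rh) h_adj.
rewrite [e x h]e_sym h_adj //=; case: (eqVneq x r) => [-> | xr]; first by rewrite e_irr.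
by rewrite e_sym; case: (e r x).
Qed.

Lemma card_Rpair_hub r : r != h -> #|Rpair e [set h; r]| = #|T| - #|nbhd e r|.-1.
Proof.
move=> rh; have := cardsC (Rpair e [set h; r]); rewrite Rpair_hubC //.
by rewrite [#|nbhd e r|](cardsD1 h) inE e_sym h_adj //; lia.
Qed.

Lemma card_Rvert_hub : #|Rvert e h| = #|T|.-1.
Proof. by rewrite Rvert_hub card_in_imset ?cardsC1 //; apply: pair_hub_inj. Qed.

(* The distances from [w] split [T] into [w], its neighbours and the rest,
   and [w] resolves a pair unless both members lie in the same part. *)
Lemma unresolved_pairs w :
  [set P in Vp T | ~~ resolves e w P] =
  pairs_in (nbhd e w) :|: pairs_in (~: (w |: nbhd e w)).
Proof.
apply/setP => P; rewrite !inE; case: cards2P => [[u [v [uv ->]]] | _]; last by rewrite !andbF.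
rewrite !andbT resolves_pair // negbK !subUset !sub1set !inE !dist_universal.
case: (eqVneq u w) uv => [-> | uw]; case: (eqVneq v w) => [-> | vw];
  rewrite ?eqxx ?e_irr ?(eq_sym w u) ?(eq_sym w v) ?(negbTE uw) ?(negbTE vw) //=;
  by case: (e w u); case: (e w v).
Qed.

Lemma card_Rvert w : #|Rvert e w| =
  'C(#|T|, 2) - 'C(#|nbhd e w|, 2) - 'C(#|T| - #|nbhd e w|.+1, 2).
Proof.
have disj : pairs_in (nbhd e w) :&: pairs_in (~: (w |: nbhd e w)) = set0.
  apply/setP => P; rewrite !inE; case: cards2P => [[u [v [uv ->]]] | _]; last by rewrite !andbF.
  by rewrite !subUset !sub1set !inE; case: (e w u); rewrite /= ?orbT ?andbF.
have card_far : #|~: (w |: nbhd e w)| = #|T| - #|nbhd e w|.+1.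
  by have := cardsC (w |: nbhd e w); rewrite cardsU1 inE e_irr; lia.
have := cardsID [set P | resolves e w P] (Vp T).
rewrite (_ : Vp T :&: _ = Rvert e w); last by apply/setP => P; rewrite !inE.
rewrite (_ : Vp T :\: _ = [set P in Vp T | ~~ resolves e w P]); last first.
  by apply/setP => P; rewrite !inE andbC.
rewrite unresolved_pairs cardsU disj cards0 subn0 !cards_draws card_draws card_far.
by move=> <-; rewrite -subnDA addnK.
Qed.

Variable d : nat.
Hypothesis rim_deg : forall w, w != h -> #|nbhd e w| = d.

Local Open Scope ring_scope.

Lemma sum_rshare_hub :
  \sum_(P in Rvert e h) rshare e h P = #|T|.-1%:R / (#|T| - d.-1)%:R.
Proof.
rewrite Rvert_hub big_imset /=; last exact: pair_hub_inj.
rewrite (eq_bigr (fun _ => (#|T| - d.-1)%:R^-1)) => [|r]; last first.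
  rewrite !inE => rh; have : [set h; r] \in Rvert e h.
    by rewrite Rvert_hub; apply: imset_f; rewrite !inE.
  rewrite inE => /andP[_ hr].
  by rewrite /rshare hr card_Rpair_hub // rim_deg.
by rewrite sumr_const cardsC1 -[_ *+ _]mulr_natr mulrC.
Qed.

Lemma ar_hub : ar e h = (#|T| - d.-1)%:R^-1.
Proof.
rewrite /ar sum_rshare_hub card_Rvert_hub mulrA mulVf ?mul1r //.
by rewrite pnatr_eq0; lia.
Qed.

Lemma sum_ar_rim : \sum_(w | w != h) ar e w =
  ('C(#|T|, 2)%:R - #|T|.-1%:R / (#|T| - d.-1)%:R) /
  ('C(#|T|, 2) - 'C(d, 2) - 'C(#|T| - d.+1, 2))%:R.
Proof.
rewrite (eq_bigr (fun w => (\sum_(P in Vp T) rshare e w P) /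
    ('C(#|T|, 2) - 'C(d, 2) - 'C(#|T| - d.+1, 2))%:R)); last first.
  by move=> w wh; rewrite /ar card_Rvert -(rim_deg wh) sum_rshare_Rvert mulrC.
rewrite -mulr_suml exchange_big /= -sum_rshare_hub sum_rshare_Rvert; congr (_ / _).
rewrite -(card_draws T 2) -sumr_const -sumrB.
apply: eq_bigr => P VP; rewrite -(sum_rshare_pair e VP) [in RHS](bigD1 h) //=.
by rewrite addrC addrK.
Qed.

Theorem RTI_universal_regular : RTI e =
  (#|T| - d.-1)%:R^-1 +
  ('C(#|T|, 2)%:R - #|T|.-1%:R / (#|T| - d.-1)%:R) /
  ('C(#|T|, 2) - 'C(d, 2) - 'C(#|T| - d.+1, 2))%:R.
Proof. by rewrite /RTI (bigD1 h) //= ar_hub sum_ar_rim. Qed.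

End UniversalVertex.

Lemma wheel_sym n : symmetric (wheel n).
Proof.
move=> i j; rewrite /wheel /cyc_adj eq_sym; congr (_ && _).
by rewrite orbA [_ || (val j == 0)]orbC -orbA; do 2 congr (_ || _); apply: orbC.
Qed.

Lemma wheel_irr n : irreflexive (wheel n).
Proof. by move=> i; rewrite /wheel eqxx. Qed.

Lemma wheel_rim_adjE n i j : 3 < n -> 0 < i < n -> j < n ->
  ((i != j) && [|| i == 0, j == 0 | cyc_adj n.-1 i.-1 j.-1]) =
  [|| j == 0, j == (if i == n.-1 then 1 else i.+1)
    | j == (if i == 1 then n.-1 else i.-1)].
Proof.
move=> n_gt3 /andP[i_gt0 i_lt] j_lt; rewrite /cyc_adj.
have succ_mod a : a < n.-1 -> a.+1 %% n.-1 = if a.+1 == n.-1 then 0 else a.+1.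
  by move=> a_lt; case: eqP => [-> | ?]; rewrite ?modnn // modn_small //; lia.
case: (j =P 0) => [-> | j_neq0] /=; first by rewrite orbT andbT; lia.
rewrite (_ : (i == 0) = false); last lia.
rewrite !succ_mod; try lia.
case: (i =P n.-1) => ?; case: (i =P 1) => ?; case: (j =P i) => ?;
  case: (i.-1.+1 =P n.-1) => ?; case: (j.-1.+1 =P n.-1) => ? /=; apply/idP/idP; lia.
Qed.

Section WheelHub.
Variables (n : nat) (h : 'I_n).
Hypothesis h_val : val h = 0.

Lemma wheel_hub_adj x : x != h -> wheel n h x.
Proof. by rewrite /wheel h_val eqxx eq_sym => ->. Qed.

Lemma card_wheel_nbhd x : 3 < n -> x != h -> #|nbhd (wheel n) x| = 3.
Proof.
case: x => i i_lt n_gt3; rewrite -val_eqE h_val /= => i_neq0.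
have i_rim : 0 < i < n by lia.
pose next := if i == n.-1 then 1 else i.+1.
pose prev := if i == 1 then n.-1 else i.-1.
have next_lt : next < n by rewrite /next; case: ifP; lia.
have prev_lt : prev < n by rewrite /prev; case: ifP; lia.
have -> : nbhd (wheel n) (Ordinal i_lt) = [set h; Ordinal next_lt; Ordinal prev_lt].
  apply/setP => j; rewrite !inE -!val_eqE /= h_val /wheel -!val_eqE /=.
  by rewrite (wheel_rim_adjE n_gt3 i_rim (ltn_ord j)) -orbA.
rewrite setUC !cardsU1 cards1 !inE -!val_eqE /= h_val /next /prev.
by case: ifP; case: ifP => /=; lia.
Qed.

End WheelHub.

Lemma wheel_rim_pairs n : (3 < n)%N ->
  ('C(n, 2) - 'C(3, 2) - 'C(n - 4, 2) = 4 * n - 13)%N.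
Proof.
move=> n_gt3; have [m ->] : exists m, n = (m + 4)%N by exists (n - 4)%N; lia.
have -> : 'C(m + 4, 2) = ('C(m, 2) + 4 * m + 6)%N.
  by rewrite !addnS !binS addn0 !bin1 !bin0; lia.
by rewrite addnK (_ : 'C(3, 2) = 3%N); [lia|].
Qed.

Local Open Scope ring_scope.

Lemma natr_bin2 (R : numFieldType) m : 'C(m, 2)%:R = m%:R * m.-1%:R / 2 :> R.
Proof. by rewrite -natrM -[m.-1 in RHS]bin1 mul_bin_diag natrM mulrC mulKf ?pnatr_eq0. Qed.

Theorem theorem3p11 (n : nat) (hn : (6 <= n)%N) :
  RTI (wheel n) =
  ((n%:R - 3) * (n%:R ^+ 2 + 8)) / (2 * (n%:R - 2) * (4 * n%:R - 13)) :> rat.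
Proof.
have n_gt0 : (0 < n)%N by lia.
pose h := Ordinal n_gt0.
have card_wheel : (2 < #|'I_n|)%N by rewrite card_ord; lia.
have rim_deg x : x != h -> #|nbhd (wheel n) x| = 3%N.
  by apply: card_wheel_nbhd => //; lia.
rewrite (RTI_universal_regular (@wheel_sym n) (@wheel_irr n)
  (wheel_hub_adj (erefl : val h = 0%N)) card_wheel rim_deg) card_ord.
have natr_pred : n.-1%:R = n%:R - 1 :> rat by rewrite -subn1 natrB //; lia.
have natr_rim : (n - 2)%:R = n%:R - 2 :> rat by rewrite natrB //; lia.
have natr_pairs : (4 * n - 13)%:R = 4 * n%:R - 13 :> rat by rewrite natrB ?natrM //; lia.
rewrite wheel_rim_pairs; last by lia.
rewrite natr_bin2 /= natr_pred natr_rim natr_pairs.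
have : 6 <= n%:R :> rat by rewrite (ler_nat rat 6 n).
move: n%:R => x x_ge6; field.
by apply/andP; split; apply/eqP => ?; lra.
Qed.
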